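(* Fix $m\in\{1,\dots,M\}$, let $n=N_r-M+1$, let $R_{m,1},\dots,R_{m,K}>0$ and let $\phi_{m,1},\dots,\phi_{m,K}>0$ be the constants defined in the context. Let $\zeta_{m,k}^*$ and $\theta_{m,k}^*$ be the optimal solution of \[ \min\ \sum_{m=1}^M\sum_{k=1}^K \phi_{m,k}R_{m,k}\,\theta_{m,k}^{-n} \] subject to $\sum_{k=1}^K\zeta_{m,k}=\frac1M$ for all $m$; $\zeta_{m,k}>0$, $\theta_{m,k}>0$; and $\theta_{m,k}\le \frac{\zeta_{m,i}}{2^{R_{m,i}}-1}-\sum_{l=1}^{i-1}\zeta_{m,l}$ for all $m$, $k$ and $i\in\{k,\dots,K\}$. Then $\theta_{m,1}^*<\theta_{m,2}^*<\dots<\theta_{m,K}^*$, and consequently \[ \frac{\zeta_{m,1}^*}{2^{R_{m,1}}-1}<\frac{\zeta_{m,2}^*}{2^{R_{m,2}}-1}<\dots<\frac{\zeta_{m,K}^*}{2^{R_{m,K}}-1}. \]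
   Context: Setting: a base station with $N_t$ antennas serves $K$ clusters, each of $N_r$ single-antenna devices, each requesting $M\le\min(N_t,N_r)$ streams. $\mathbf R_t$, $\mathbf R_r$ are Hermitian positive definite correlation matrices, $\lambda_1,\dots,\lambda_{N_r}$ the eigenvalues of $\mathbf R_r$; $\mathbf V\in\mathbb C^{N_t\times M}$ with unit-norm columns, $\mathbf R_{t'}=\mathbf V^{\mathrm H}\mathbf R_t\mathbf V$ (invertible); $\bar\gamma>0$; path loss $\mathcal K d_k^{-\alpha}$ with $d_1\le\dots\le d_K$. With $W=(\lambda_i^{N_r-j})_{i,j}$ and $D$ equal to $W$ with first column replaced by $(\lambda_i^{M-2}\ln\lambda_i)_i$, $\phi_{m,k}=\frac{1}{N_r!\det\mathbf R_r}\big(\frac{[\mathbf R_{t'}^{-1}]_{mm}}{\bar\gamma\mathcal K d_k^{-\alpha}}\big)^{N_r}$ if $M=1$, and $\phi_{m,k}=\frac{(-1)^{N_r-M}(N_r-1)!\det D}{(N_r-M)!(N_r-M+1)!(M-2)!\det W}\big(\frac{[\mathbf R_{t'}^{-1}]_{mm}}{\bar\gamma\mathcal K d_k^{-\alpha}}\big)^{N_r-M+1}$ if $M>1$. (The optimal solution is given explicitly by $\boldsymbol\zeta_m^*=\mathbf L_m^{-1}\mathbf b_m/(M\mathbf 1_K^{\mathrm T}\mathbf L_m^{-1}\mathbf b_m)$, with $\mathbf L_m^{\mathrm T}=\mathbf U_m$ upper triangular, diagonal $1/(2^{R_{m,k}}-1)$, entries $-1$ above the diagonal, and $[\mathbf b_m]_k=\big(n\phi_{m,k}R_{m,k}/(\mathbf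 e_k^{\mathrm T}\mathbf U_m^{-1}\mathbf 1_K)\big)^{1/(n+1)}$.) *)

From HB Require Import structures.
From mathcomp Require Import all_boot all_order all_algebra.
From mathcomp Require Import all_classical all_reals all_analysis.
Set Implicit Arguments. Unset Strict Implicit. Unset Printing Implicit Defensive.
Import Order.TTheory GRing.Theory Num.Theory.
Local Open Scope ring_scope.

Section Defs.
Variable R : realType.

(* W = (lambda_i^(Nr - j))_{i,j}, j 1-indexed; here j is 0-indexed. *)
Definition matW (Nr : nat) (lam : 'I_Nr -> R) : 'M[R]_Nr :=
  \matrix_(i < Nr, j < Nr) lam i ^+ (Nr - 1 - j).

Definition matD (Nr M : nat) (lam : 'I_Nr -> R) : 'M[R]_Nr :=
  \matrix_(i < Nr, j < Nr)
    if (j : nat) == 0%N then lam i ^+ (M - 2) * ln (lam i)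
    else lam i ^+ (Nr - 1 - j).

(* phi_{m,k}.  lam = eigenvalues of R_r (so det R_r = prod lam),
   q = [R_{t'}^{-1}]_{mm}, gam = gamma bar, Kc = path-loss constant K,
   alpha = path-loss exponent, dk = distance d_k. *)
Definition phi (Nr M : nat) (lam : 'I_Nr -> R) (q gam Kc alpha dk : R) : R :=
  let base := q / (gam * Kc * dk `^ (- alpha)) in
  if M == 1%N then
    (Nr`!%:R * \prod_(i < Nr) lam i)^-1 * base ^+ Nr
  else
    ((-1) ^+ (Nr - M) * (Nr.-1)`!%:R * \det (matD M lam)) /
    ((Nr - M)`!%:R * (Nr - M + 1)`!%:R * (M - 2)`!%:R * \det (matW lam))
    * base ^+ (Nr - M + 1).

Definition objective (M K n : nat) (ph Rt : 'I_M -> 'I_K -> R)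
  (theta : 'I_M -> 'I_K -> R) : R :=
  \sum_(m < M) \sum_(k < K) ph m k * Rt m k * (theta m k) ^- n.

Definition feasible (M K : nat) (Rt : 'I_M -> 'I_K -> R)
  (zeta theta : 'I_M -> 'I_K -> R) : Prop :=
  (forall m : 'I_M, \sum_(k < K) zeta m k = M%:R^-1) /\
  (forall m k, 0 < zeta m k) /\ (forall m k, 0 < theta m k) /\
  (forall m (k i : 'I_K), (k <= i)%N ->
     theta m k <= zeta m i / (2 `^ (Rt m i) - 1)
                  - \sum_(l < K | (l < i)%N) zeta m l).

Definition optimal (M K n : nat) (ph Rt : 'I_M -> 'I_K -> R)
  (zeta theta : 'I_M -> 'I_K -> R) : Prop :=
  feasible Rt zeta theta /\
  forall zeta' theta', feasible Rt zeta' theta' ->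
    objective n ph Rt theta <= objective n ph Rt theta'.

End Defs.

From HB Require Import structures.
From mathcomp Require Import all_boot all_order all_algebra.
From mathcomp Require Import all_classical all_reals all_analysis.
From mathcomp Require Import ring lra.
Set Implicit Arguments.
Unset Strict Implicit.
Unset Printing Implicit Defensive.
Import Order.TTheory GRing.Theory Num.Theory.
Local Open Scope ring_scope.

(* The problem separates over m, so (zeta m, theta m) minimizes
   sum_k w_k theta_k^-n (w_k = phi_{m,k} R_{m,k}) subject to sum_k zeta_k = 1/M
   and theta_k <= cap_i := zeta_i / a_i - sum_{l<i} zeta_l for all i >= k, where
   a_i = 2^{R_{m,i}} - 1.  Three perturbations of an optimum show:
   - cap is nondecreasing: otherwise move a little mass from the offending index
     to the last one, which raises every later cap, and raise every later theta;
   - theta_k = cap_k: otherwise raise theta_k;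
   - cap is strictly increasing: on a maximal plateau p < q of cap with value mu,
     moving mass e from p to q lowers theta_p by e / a_p and raises theta_q by
     (1 + 1/a_q) e, which changes the cost by
     n mu^(-n-1) (w_p / a_p - w_q (1 + 1/a_q)) e + O(e^2) < 0, because phi_{m,k}
     is nondecreasing in d_k and x / (2^x - 1) < 1 / ln 2 < y 2^y / (2^y - 1).
   Finally zeta_k / a_k = cap_k + sum_{l<k} zeta_l is increasing as well. *)

Section RealInequalities.
Variable R : realType.

Lemma exists_pos_lt_seq (bs : seq R) :
  all (fun b => 0 < b) bs -> exists2 e : R, 0 < e & all (fun b => e < b) bs.
Proof.
elim: bs => [_|b bs IH /= /andP [b_gt0 /IH [e e_gt0 e_lt]]]; first by exists 1.
exists (Num.min e (b / 2)); first by rewrite lt_min e_gt0 divr_gt0.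
rewrite /= gt_min ltr_pdivrMr // ltr_pMr // ltr1n orbT /=.
by apply: sub_all e_lt => c; apply: le_lt_trans; rewrite ge_min lexx.
Qed.

Lemma exists_pos_lt_fin (T : finType) (P : pred T) (g : T -> R) :
  (forall i, P i -> 0 < g i) -> exists2 e : R, 0 < e & forall i, P i -> e < g i.
Proof.
move=> g_gt0; have [|e e_gt0 /allP e_lt] := exists_pos_lt_seq (bs := [seq g i | i in P]).
  by apply/allP => _ /mapP [i + ->]; rewrite mem_enum; apply: g_gt0.
by exists e => // i Pi; apply: e_lt; rewrite map_f // mem_enum.
Qed.

Lemma exprn_tangent_le (n : nat) (x y : R) : 0 <= x -> 0 <= y ->
  y ^+ n + n%:R * y ^+ n.-1 * (x - y) <= x ^+ n.
Proof.
move=> x_ge0 y_ge0; rewrite -lerBrDl subrXX mulrC.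
have -> : n%:R * y ^+ n.-1 = \sum_(i < n) y ^+ (n.-1 - i) * y ^+ i.
  rewrite mulr_natl -[n in _ *+ n]card_ord -sumr_const; apply: eq_bigr => i _.
  by rewrite -exprD subnK // -ltnS (leq_trans (ltn_ord i)) // leqSpred.
have [yx|xy] := leP y x.
  rewrite ler_wpM2l ?subr_ge0 //; apply: ler_sum => i _.
  by rewrite ler_wpM2r ?exprn_ge0 // lerXn2r.
apply: ler_wnM2l; first by rewrite subr_le0 ltW.
apply: ler_sum => i _.
by rewrite ler_wpM2r ?exprn_ge0 // lerXn2r // ltW.
Qed.

(* The tangent-line bound for x ^+ n makes the first-order gain quantitative:
   it persists for every e below an explicit threshold. *)
Lemma trade_gain (n : nat) (wp wq al be mu e : R) :
  (0 < n)%N -> 0 < wp -> 0 < wq -> 0 < al -> 0 < be -> 0 < e -> al * e < mu ->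
  n%:R * al * be * (wp + wq) * e < (wq * be - wp * al) * mu ->
  wp * (mu - al * e) ^- n + wq * (mu + be * e) ^- n < (wp + wq) * mu ^- n.
Proof.
move=> n_gt0 wp_gt0 wq_gt0 al_gt0 be_gt0 e_gt0 ale_lt gain.
have mu_gt0 : 0 < mu by apply: lt_trans _ ale_lt; rewrite mulr_gt0.
have x_gt0 : 0 < mu - al * e by rewrite subr_gt0.
have y_gt0 : 0 < mu + be * e by rewrite addr_gt0 // mulr_gt0.
set U := mu ^+ n; set N := n%:R * mu ^+ n.-1.
have U_gt0 : 0 < U by rewrite exprn_gt0.
have N_gt0 : 0 < N by rewrite mulr_gt0 ?ltr0n ?exprn_gt0.
have nU : n%:R * U = mu * N by rewrite /N mulrCA -exprS prednK.
have x_ge : U - al * e * N <= (mu - al * e) ^+ n.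
  by have := exprn_tangent_le n (ltW x_gt0) (ltW mu_gt0); rewrite /U /N; lra.
have y_ge : U + be * e * N <= (mu + be * e) ^+ n.
  by have := exprn_tangent_le n (ltW y_gt0) (ltW mu_gt0); rewrite /U /N; lra.
clearbody U N.
have nale : n%:R * al * e < mu.
  rewrite -(ltr_pM2r (mulr_gt0 (addr_gt0 wp_gt0 wq_gt0) be_gt0)).
  have : 0 < wp * al * mu by rewrite !mulr_gt0.
  have : 0 < wp * be * mu by rewrite !mulr_gt0.
  lra.
set D := U - al * e * N; set E := U + be * e * N.
have D_gt0 : 0 < D.
  rewrite subr_gt0 -(ltr_pM2l (_ : 0 < n%:R)) ?ltr0n // nU.
  by rewrite !mulrA ltr_pM2r.
have E_gt0 : 0 < E by rewrite addr_gt0 // !mulr_gt0.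
apply: (le_lt_trans (lerD (_ : _ <= wp / D) (_ : _ <= wq / E))).
- by rewrite ler_pM2l // lef_pV2 ?posrE ?exprn_gt0.
- by rewrite ler_pM2l // lef_pV2 ?posrE ?exprn_gt0.
rewrite -subr_gt0.
have -> : (wp + wq) / U - (wp / D + wq / E) =
    e * N * ((wq * be - wp * al) * U - al * be * e * N * (wp + wq)) / (U * D * E).
  by rewrite /D /E; field; rewrite -/D -/E !gt_eqF.
rewrite !divr_gt0 ?mulr_gt0 // subr_gt0 -(ltr_pM2l (_ : 0 < n%:R)) ?ltr0n //.
rewrite [X in _ < X]mulrCA nU.
by rewrite -(ltr_pM2r N_gt0) in gain; lra.
Qed.

Lemma powR2E (t : R) : 2 `^ t = expR (t * ln 2).
Proof. by rewrite /powR pnatr_eq0. Qed.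

Lemma ln2_gt0 : 0 < ln (2 : R).
Proof. by rewrite ln_gt0 // ltr1n. Qed.

Lemma pow2B1_gt (t : R) : 0 < t -> t * ln 2 < 2 `^ t - 1.
Proof.
move=> t_gt0; have := expR_gt1Dx (lt0r_neq0 (mulr_gt0 t_gt0 ln2_gt0)).
by rewrite powR2E; lra.
Qed.

Lemma pow2B1_gt0 (t : R) : 0 < t -> 0 < 2 `^ t - 1.
Proof. by move=> t_gt0; apply: lt_trans _ (pow2B1_gt t_gt0); rewrite mulr_gt0 ?ln2_gt0. Qed.

Lemma pow2B1_lt (t : R) : 0 < t -> 2 `^ t - 1 < t * ln 2 * 2 `^ t.
Proof.
move=> t_gt0; set u := t * ln 2; have u_gt0 : 0 < u by rewrite mulr_gt0 ?ln2_gt0.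
have : 1 - u < expR (- u) by rewrite expR_gt1Dx // oppr_eq0 gt_eqF.
rewrite expRN powR2E -(ltr_pM2r (expR_gt0 u)) mulVf ?gt_eqF ?expR_gt0 //.
lra.
Qed.

Lemma div_pow2B1_lt_mulD (x y : R) : 0 < x -> 0 < y ->
  x / (2 `^ x - 1) < y * (1 + (2 `^ y - 1)^-1).
Proof.
move=> x_gt0 y_gt0; have ln2 := ln2_gt0; apply: (@lt_trans _ _ (ln 2)^-1).
  by rewrite ltr_pdivrMr ?pow2B1_gt0 // ltr_pdivlMl // mulrC pow2B1_gt.
have b_gt0 := pow2B1_gt0 y_gt0.
have -> : y * (1 + (2 `^ y - 1)^-1) = y * 2 `^ y / (2 `^ y - 1).
  by field; rewrite gt_eqF.
rewrite ltr_pdivlMr // ltr_pdivrMl //.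
by have := pow2B1_lt y_gt0; rewrite (mulrC y) -mulrA.
Qed.

(* phi is c * b ^+ N with b = q d^alpha / (gam Kc) increasing in d; the sign of c,
   which involves det D and det W, is supplied by the positivity hypothesis. *)
Lemma phi_le_dist (Nr M : nat) (lam : 'I_Nr -> R) (q gam Kc alpha d1 d2 : R) :
  0 < q -> 0 < gam -> 0 < Kc -> 0 <= alpha -> 0 < d1 -> d1 <= d2 ->
  0 < phi M lam q gam Kc alpha d1 ->
  phi M lam q gam Kc alpha d1 <= phi M lam q gam Kc alpha d2.
Proof.
move=> q_gt0 gam_gt0 Kc_gt0 alpha_ge0 d1_gt0 d12.
rewrite /phi /=; set b1 := q / (_ * d1 `^ _); set b2 := q / (_ * d2 `^ _).
have c_gt0 : 0 < q / (gam * Kc) by rewrite divr_gt0 ?mulr_gt0.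
have b_E d : q / (gam * Kc * d `^ (- alpha)) = q / (gam * Kc) * d `^ alpha.
  by rewrite powRN invfM invrK mulrA.
have b1_gt0 : 0 < b1 by rewrite /b1 b_E mulr_gt0 ?powR_gt0.
have b12 : b1 <= b2.
  rewrite /b1 /b2 !b_E ler_pM2l //.
  by apply: ge0_ler_powR => //; rewrite nnegrE ltW // (lt_le_trans d1_gt0).
have mono (c : R) (N : nat) : 0 < c * b1 ^+ N -> c * b1 ^+ N <= c * b2 ^+ N.
  rewrite pmulr_lgt0 ?exprn_gt0 // => c0.
  by rewrite ler_pM2l // lerXn2r // nnegrE ltW // (lt_le_trans b1_gt0).
by case: ifP => _; apply: mono.
Qed.
End RealInequalities.

Lemma sum_if_eq (V : nmodType) (T : finType) (P : pred T) (q : T) (e : V) :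
  \sum_(l | P l) (if l == q then e else 0) = if P q then e else 0.
Proof.
rewrite big_mkcond (bigD1 q) //= eqxx big1 ?addr0 // => l /negbTE ->.
by case: (P l).
Qed.

Section RowProblem.
Variables (R : realType) (K n : nat) (a w : 'I_K -> R) (s : R).

Definition cap (z : 'I_K -> R) (i : 'I_K) : R :=
  z i / a i - \sum_(l < K | (l < i)%N) z l.

Definition row_feasible (z th : 'I_K -> R) : Prop :=
  [/\ \sum_(k < K) z k = s, forall k, 0 < z k, forall k, 0 < th k
    & forall k i : 'I_K, (k <= i)%N -> th k <= cap z i].

Definition row_cost (th : 'I_K -> R) : R := \sum_(k < K) w k * th k ^- n.

Definition row_optimal (z th : 'I_K -> R) : Prop :=
  row_feasible z th /\
  forall z' th', row_feasible z' th' -> row_cost th <= row_cost th'.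

Definition transfer (z : 'I_K -> R) (p q : 'I_K) (e : R) (l : 'I_K) : R :=
  z l + (if l == q then e else 0) - (if l == p then e else 0).

Lemma sum_transfer z p q e :
  \sum_(l < K) transfer z p q e l = \sum_(l < K) z l.
Proof. by rewrite sumrB big_split /= !sum_if_eq addrK. Qed.

Lemma transfer_gt0 z p q e l :
  (forall k, 0 < z k) -> 0 <= e -> e < z p -> 0 < transfer z p q e l.
Proof.
move=> z_gt0 e_ge0 e_lt; rewrite /transfer; have := z_gt0 l.
by case: (l == q); case: (eqVneq l p) => [->|_]; lra.
Qed.

Lemma cap_transfer z p q e i :
  cap (transfer z p q e) i = cap z i + (if i == q then e / a i else 0)
    - (if i == p then e / a i else 0) - (if (q < i)%N then e else 0)
    + (if (p < i)%N then e else 0).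
Proof.
rewrite /cap /transfer sumrB big_split /= !sum_if_eq.
by case: (i == q); case: (i == p); case: (q < i)%N; case: (p < i)%N;
  rewrite ?mul0r; ring.
Qed.

Hypothesis a_gt0 : forall k, 0 < a k.

Lemma cap_transfer_ge z (p q i : 'I_K) e :
  (p < q)%N -> 0 <= e -> i != p -> cap z i <= cap (transfer z p q e) i.
Proof.
move=> pq e_ge0 /negbTE ip; rewrite cap_transfer ip /= subr0 -2!addrA lerDl addr_ge0 //.
  by case: ifP => _; rewrite ?lexx // divr_ge0 // ltW.
rewrite addrC subr_ge0; case: ltnP => [qi|_] /=; first by rewrite (ltn_trans pq qi).
by case: ifP.
Qed.

Lemma cap_transfer_src z (p q : 'I_K) e :
  (p < q)%N -> cap (transfer z p q e) p = cap z p - (a p)^-1 * e.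
Proof.
move=> pq; rewrite cap_transfer eqxx ltnn ltnNge (ltnW pq) -val_eqE /= ltn_eqF //.
by rewrite addr0 subr0 addr0 mulrC.
Qed.

Lemma cap_transfer_dst z (p q : 'I_K) e :
  (p < q)%N -> cap (transfer z p q e) q = cap z q + (1 + (a q)^-1) * e.
Proof.
move=> pq; rewrite cap_transfer eqxx ltnn pq -val_eqE /= gtn_eqF //; ring.
Qed.

Lemma cap_transfer_mid z (p q i : 'I_K) e :
  0 <= e -> (p < i)%N -> (i <= q)%N -> cap z i + e <= cap (transfer z p q e) i.
Proof.
move=> e_ge0 pi iq; have ip : (i == p) = false by rewrite -val_eqE gtn_eqF.
rewrite cap_transfer ip pi ltnNge iq /= !subr0 lerD2r lerDl.
by case: ifP => _; rewrite ?lexx // divr_ge0 // ltW.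
Qed.

Hypotheses (n_gt0 : (0 < n)%N) (w_gt0 : forall k, 0 < w k).

Lemma row_cost_lt th th' (k0 : 'I_K) : (forall k, 0 < th k) ->
  (forall k, th k <= th' k) -> th k0 < th' k0 -> row_cost th' < row_cost th.
Proof.
move=> th_gt0 th_le th_lt; rewrite /row_cost (bigD1 k0) //= [X in _ < X](bigD1 k0) //=.
have th'_gt0 k : 0 < th' k := lt_le_trans (th_gt0 k) (th_le k).
apply: ltr_leD; last apply: ler_sum => k _.
  by rewrite ltr_pM2l // ltf_pV2 ?posrE ?exprn_gt0 // ltrXn2r -?lt0n ?ltW.
by rewrite ler_pM2l // lef_pV2 ?posrE ?exprn_gt0 // lerXn2r // nnegrE ltW.
Qed.

Lemma row_cost_set2 th (p q : 'I_K) x y : p != q ->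
  row_cost (fun l => if l == p then x else if l == q then y else th l)
    + (w p * th p ^- n + w q * th q ^- n)
  = row_cost th + (w p * x ^- n + w q * y ^- n).
Proof.
move=> pq; rewrite /row_cost (bigD1 p) //= (bigD1 q) 1?eq_sym //=.
rewrite [in RHS](bigD1 p) //= [in RHS](bigD1 q) 1?eq_sym //= !eqxx (negbTE pq).
rewrite (eq_bigr (fun l => w l * th l ^- n)); last first.
  by move=> l /andP [/negbTE -> /negbTE ->].
ring.
Qed.

Variables z th : 'I_K -> R.
Hypothesis opt : row_optimal z th.

Lemma row_optimal_cap_le (k j : 'I_K) : (k < j)%N -> cap z k <= cap z j.
Proof.
have [[z_sum z_gt0 th_gt0 th_le] opt_min] := opt.
move=> kj; rewrite leNgt; apply/negP => cap_lt.
have last_lt : (K.-1 < K)%N by rewrite ltn_predL (leq_ltn_trans _ (ltn_ord j)).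
pose q := Ordinal last_lt.
have le_q (i : 'I_K) : (i <= q)%N by rewrite /= -ltnS (ltn_predK (ltn_ord i)).
have kq : (k < q)%N := leq_trans kj (le_q j).
have [|e e_gt0 /and3P [e_z e_cap _]] :=
    exists_pos_lt_seq (bs := [:: z k; a k * (cap z k - cap z j)]).
  by rewrite /= z_gt0 mulr_gt0 ?subr_gt0.
pose th' (l : 'I_K) := if (k < l)%N then th l + e else th l.
have feas' : row_feasible (transfer z k q e) th'.
  split => [|l|l|l i li]; first by rewrite sum_transfer.
  - exact: transfer_gt0 z_gt0 (ltW e_gt0) e_z.
  - by rewrite /th'; case: ifP; rewrite ?addr_gt0.
  rewrite /th'; case: ifP => kl.
    apply: le_trans (cap_transfer_mid _ (ltW e_gt0) (leq_trans kl li) (le_q i)).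
    by rewrite lerD2r th_le.
  case: (eqVneq i k) => [ik|ik]; last first.
    exact: le_trans (th_le l i li) (cap_transfer_ge _ kq (ltW e_gt0) ik).
  move: li; rewrite ik => lk; rewrite cap_transfer_src // mulrC.
  have := th_le l j (leq_trans lk (ltnW kj)).
  have : e / a k < cap z k - cap z j by rewrite ltr_pdivrMr // mulrC.
  lra.
have better : row_cost th' < row_cost th.
  apply: (row_cost_lt (k0 := j)) => // [l|]; rewrite /th'; last by rewrite kj ltrDl.
  by case: ifP => _; rewrite ?lexx // lerDl ltW.
by move: (opt_min _ _ feas'); rewrite leNgt better.
Qed.

Lemma row_optimal_tight l : th l = cap z l.
Proof.
have [[z_sum z_gt0 th_gt0 th_le] opt_min] := opt.
apply/eqP; rewrite eq_le th_le //=; rewrite leNgt; apply/negP => th_lt.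
pose th' (k : 'I_K) := if k == l then cap z l else th k.
have feas' : row_feasible z th'.
  split => // [k|k i]; rewrite /th'.
    by case: eqVneq => _ //; apply: lt_trans (th_gt0 l) th_lt.
  case: eqVneq => [->|_]; last exact: th_le.
  by rewrite leq_eqVlt => /orP [/eqP/val_inj -> //|]; apply: row_optimal_cap_le.
have better : row_cost th' < row_cost th.
  apply: (row_cost_lt (k0 := l)) => // [k|]; rewrite /th'; last by rewrite eqxx.
  by case: eqVneq => [->|_]; rewrite ?lexx // ltW.
by move: (opt_min _ _ feas'); rewrite leNgt better.
Qed.

Lemma row_optimal_trade_feasible (p q : 'I_K) (e : R) :
  (p < q)%N -> 0 < e -> e < z p -> (a p)^-1 * e < cap z p ->
  (forall l : 'I_K, (l < p)%N -> (a p)^-1 * e <= cap z p - cap z l) ->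
  (forall i : 'I_K, (q < i)%N -> (1 + (a q)^-1) * e <= cap z i - cap z q) ->
  row_feasible (transfer z p q e)
    (fun l => if l == p then cap z p - (a p)^-1 * e
              else if l == q then cap z q + (1 + (a q)^-1) * e else th l).
Proof.
move=> pq e_gt0 e_z e_cap below above.
have [[z_sum z_gt0 th_gt0 th_le] _] := opt.
have e_ge0 := ltW e_gt0.
split => [|l|l|l i li]; first by rewrite sum_transfer.
- exact: transfer_gt0 z_gt0 e_ge0 e_z.
- case: eqVneq => _; first by rewrite subr_gt0.
  case: eqVneq => _ //; rewrite -row_optimal_tight addr_gt0 // mulr_gt0 //.
  by rewrite addr_gt0 ?invr_gt0.
case: (eqVneq l p) => [lp|lp].
  move: li; rewrite lp => pi; case: (eqVneq i p) => [->|ip].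
    by rewrite cap_transfer_src.
  have {}pi : (p < i)%N by rewrite ltn_neqAle pi andbT val_eqE eq_sym.
  apply: le_trans (cap_transfer_ge _ pq e_ge0 ip).
  rewrite lerBlDr (le_trans (row_optimal_cap_le pi)) // lerDl.
  by rewrite mulr_ge0 ?invr_ge0 ?ltW.
case: (eqVneq l q) => [lq|lq].
  move: li; rewrite lq => qi; case: (eqVneq i q) => [->|iq].
    by rewrite cap_transfer_dst.
  have {}qi : (q < i)%N by rewrite ltn_neqAle qi andbT val_eqE eq_sym.
  have ip : i != p by rewrite -val_eqE gtn_eqF // (ltn_trans pq qi).
  by apply: le_trans (cap_transfer_ge _ pq e_ge0 ip); rewrite -lerBrDl above.
case: (eqVneq i p) => [ip|ip]; last first.
  exact: le_trans (th_le l i li) (cap_transfer_ge _ pq e_ge0 ip).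
subst i; have {}lp : (l < p)%N by rewrite ltn_neqAle li andbT val_eqE.
by rewrite cap_transfer_src // row_optimal_tight lerBrDl addrC -lerBrDl below.
Qed.

Hypothesis w_lt : forall p q : 'I_K, (p < q)%N -> w p / a p < w q * (1 + (a q)^-1).

Lemma row_optimal_no_plateau (p q : 'I_K) : (p < q)%N -> cap z p = cap z q ->
  (forall l : 'I_K, (l < p)%N -> cap z l < cap z p) ->
  (forall i : 'I_K, (q < i)%N -> cap z q < cap z i) -> False.
Proof.
move=> pq cap_pq below above.
have [[_ z_gt0 th_gt0 _] opt_min] := opt.
set mu := cap z p; set al := (a p)^-1; set be := 1 + (a q)^-1.
have mu_gt0 : 0 < mu by rewrite /mu -row_optimal_tight th_gt0.
have al_gt0 : 0 < al by rewrite invr_gt0.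
have be_gt0 : 0 < be by rewrite addr_gt0 ?invr_gt0.
have [gL gL_gt0 gL_lt] : exists2 g : R, 0 < g &
    forall l : 'I_K, (l < p)%N -> g < (mu - cap z l) / al.
  by apply: exists_pos_lt_fin => l lp; rewrite divr_gt0 // subr_gt0 below.
have [gR gR_gt0 gR_lt] : exists2 g : R, 0 < g &
    forall i : 'I_K, (q < i)%N -> g < (cap z i - mu) / be.
  by apply: exists_pos_lt_fin => i qi; rewrite divr_gt0 // subr_gt0 /mu cap_pq above.
have n_pos : 0 < n%:R :> R by rewrite ltr0n.
have den_gt0 := mulr_gt0 (mulr_gt0 (mulr_gt0 n_pos al_gt0) be_gt0)
  (addr_gt0 (w_gt0 p) (w_gt0 q)).
pose T := (w q * be - w p * al) * mu / (n%:R * al * be * (w p + w q)).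
have T_gt0 : 0 < T by rewrite divr_gt0 // mulr_gt0 // subr_gt0 w_lt.
have [|e e_gt0 /and5P [e_z e_mu e_L e_R /andP [e_T _]]] :=
    exists_pos_lt_seq (bs := [:: z p; mu / al; gL; gR; T]).
  by rewrite /= z_gt0 divr_gt0 ?gL_gt0 ?gR_gt0 ?T_gt0.
have ale_lt : al * e < mu by rewrite mulrC -ltr_pdivlMr.
have ale_le (l : 'I_K) : (l < p)%N -> al * e <= mu - cap z l.
  by move=> lp; rewrite mulrC -ler_pdivlMr // ltW // (lt_trans e_L (gL_lt l lp)).
have bee_le (i : 'I_K) : (q < i)%N -> be * e <= cap z i - cap z q.
  by move=> qi; rewrite -cap_pq mulrC -ler_pdivlMr // ltW // (lt_trans e_R (gR_lt i qi)).
have gain : n%:R * al * be * (w p + w q) * e < (w q * be - w p * al) * mu.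
  by rewrite mulrC -ltr_pdivlMr.
have better : row_cost (fun l => if l == p then mu - al * e
                        else if l == q then cap z q + be * e else th l) < row_cost th.
  have pq_neq : p != q by rewrite -val_eqE ltn_eqF.
  have := row_cost_set2 th (mu - al * e) (cap z q + be * e) pq_neq.
  have := trade_gain n_gt0 (w_gt0 p) (w_gt0 q) al_gt0 be_gt0 e_gt0 ale_lt gain.
  by rewrite !row_optimal_tight -cap_pq mulrDl; lra.
have := opt_min _ _ (row_optimal_trade_feasible pq e_gt0 e_z ale_lt ale_le bee_le).
by rewrite leNgt better.
Qed.

Lemma row_optimal_cap_lt (k1 k2 : 'I_K) : (k1 < k2)%N -> cap z k1 < cap z k2.
Proof.
move=> k12; rewrite lt_neqAle row_optimal_cap_le // andbT; apply/eqP => cap_eq.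
pose P i := cap z i == cap z k1.
have Pk2 : P k2 by rewrite /P cap_eq.
have [p /eqP cap_p p_min] := arg_minnP (P := P) val (eqxx (cap z k1)).
have [q /eqP cap_q q_max] := arg_maxnP (P := P) val Pk2.
apply: (@row_optimal_no_plateau p q); first 2 last.
- move=> l lp; rewrite lt_neqAle row_optimal_cap_le // andbT cap_p.
  by apply/eqP => cap_l; move: (p_min l); rewrite /P cap_l eqxx leqNgt lp => /(_ isT).
- move=> i qi; rewrite lt_neqAle row_optimal_cap_le // andbT cap_q eq_sym.
  by apply/eqP => cap_i; move: (q_max i); rewrite /P cap_i eqxx /= leqNgt qi => /(_ isT).
- exact: leq_ltn_trans (p_min k1 (eqxx _)) (leq_trans k12 (q_max k2 Pk2)).
- by rewrite cap_p cap_q.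
Qed.

Lemma row_optimal_increasing (k1 k2 : 'I_K) : (k1 < k2)%N ->
  th k1 < th k2 /\ z k1 / a k1 < z k2 / a k2.
Proof.
move=> k12; rewrite !row_optimal_tight; split; first exact: row_optimal_cap_lt.
have capE k : z k / a k = cap z k + \sum_(l < K | (l < k)%N) z l by rewrite subrK.
rewrite !capE ltr_leD ?row_optimal_cap_lt // [X in X <= _]big_mkcond.
rewrite [X in _ <= X]big_mkcond ler_sum // => l _.
have [_ z_gt0 _ _] := opt.1.
case: ifP => [lk1|_]; first by rewrite (ltn_trans lk1 k12).
by case: ifP; rewrite ?lexx // ltW.
Qed.
End RowProblem.

Lemma optimal_row (R : realType) (M K n : nat) (ph Rt zeta theta : 'I_M -> 'I_K -> R)
    (m : 'I_M) :
  optimal n ph Rt zeta theta ->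
  row_optimal n (fun k => 2 `^ Rt m k - 1) (fun k => ph m k * Rt m k) M%:R^-1
    (zeta m) (theta m).
Proof.
move=> [[zeta_sum [zeta_gt0 [theta_gt0 theta_le]]] opt].
split=> [|z' th' [z'_sum z'_gt0 th'_gt0 th'_le]].
  by split; [apply: zeta_sum | apply: zeta_gt0 | apply: theta_gt0 | apply: theta_le].
pose upd (f : 'I_M -> 'I_K -> R) g m' := if m' == m then g else f m'.
have feas' : feasible Rt (upd zeta z') (upd theta th').
  rewrite /upd; split; [|split; [|split]].
  - by move=> m'; case: eqP.
  - by move=> m' k; case: eqP.
  - by move=> m' k; case: eqP.
  - by move=> m' k i; case: eqP => [->|_]; [apply: th'_le | apply: theta_le].
have := opt _ _ feas'; rewrite /objective (bigD1 m) //= [X in _ <= X](bigD1 m) //=.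
rewrite [X in _ <= _ + X](eq_bigr (fun i => \sum_(k < K) ph i k * Rt i k * theta i k ^- n)).
  by rewrite /upd eqxx lerD2r.
by move=> i /negbTE ne; rewrite /upd ne.
Qed.

Theorem mainTheorem2 (R : realType) (Nt Nr M K : nat)
  (lam : 'I_Nr -> R) (q : 'I_M -> R) (gam Kc alpha : R) (d : 'I_K -> R)
  (Rt : 'I_M -> 'I_K -> R) (zeta theta : 'I_M -> 'I_K -> R) (m : 'I_M) :
  (1 <= M)%N -> (M <= minn Nt Nr)%N ->
  (forall i, 0 < lam i) ->
  (forall m', 0 < q m') ->
  0 < gam -> 0 < Kc -> 0 < alpha ->
  (forall k, 0 < d k) ->
  (forall k1 k2 : 'I_K, (k1 <= k2)%N -> d k1 <= d k2) ->
  (forall k, 0 < Rt m k) ->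
  (forall k, 0 < phi M lam (q m) gam Kc alpha (d k)) ->
  optimal (Nr - M + 1)
    (fun m' k => phi M lam (q m') gam Kc alpha (d k)) Rt zeta theta ->
  forall k1 k2 : 'I_K, (k1 < k2)%N ->
    theta m k1 < theta m k2 /\
    zeta m k1 / (2 `^ (Rt m k1) - 1) < zeta m k2 / (2 `^ (Rt m k2) - 1).
Proof.
move=> _ _ _ q_gt0 gam_gt0 Kc_gt0 alpha_gt0 d_gt0 d_le Rt_gt0 phi_gt0 opt.
apply: (row_optimal_increasing _ _ _ (optimal_row m opt)).
- by move=> k; apply: pow2B1_gt0.
- by rewrite addn1.
- by move=> k; rewrite mulr_gt0.
move=> k1 k2 k12; rewrite -!mulrA.
have phi_le := phi_le_dist (q_gt0 m) gam_gt0 Kc_gt0 (ltW alpha_gt0) (d_gt0 k1)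
  (d_le _ _ (ltnW k12)) (phi_gt0 k1).
apply: le_lt_trans (ler_wpM2r _ phi_le) _.
  by rewrite divr_ge0 ?ltW ?pow2B1_gt0.
by rewrite ltr_pM2l ?div_pow2B1_lt_mulD // (lt_le_trans (phi_gt0 k1) phi_le).
Qed.
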